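(* Let $\gamma = \lim_{n\to\infty}\left(1 + \frac{1}{2} + \cdots + \frac{1}{n} - \ln n\right)$ be Euler's constant. Then $$e^{\gamma} = \prod_{n=1}^{\infty} \left( \prod_{k=0}^{n} (k+1)^{(-1)^{k+1}\binom{n}{k}} \right)^{1/(n+1)} = \left(\frac{2}{1}\right)^{1/2}\left(\frac{2^2}{1\cdot 3}\right)^{1/3}\left(\frac{2^3\cdot 4}{1\cdot 3^3}\right)^{1/4}\left(\frac{2^4\cdot 4^4}{1\cdot 3^6\cdot 5}\right)^{1/5}\cdots,$$ where the infinite product converges, i.e. its $N$th partial product tends to $e^\gamma$ as $N\to\infty$. Equivalently, $$\gamma = \sum_{n=1}^{\infty} \frac{1}{n+1} \sum_{k=0}^{n} (-1)^{k+1}\binom{n}{k} \ln(k+1).$$ *)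

From Stdlib Require Import Reals.
From Coquelicot Require Import Coquelicot.
Open Scope R_scope.

Fixpoint harmonic (n : nat) : R :=
  match n with
  | O => 0
  | S m => harmonic m + / INR (S m)
  end.

Definition euler_gamma : R :=
  real (Lim_seq (fun n => harmonic n - ln (INR n))).

Definition euler_factor (n : nat) : R :=
  Rpower (prod_f_R0 (fun k => Rpower (INR k + 1) ((-1) ^ (k + 1) * Binomial.C n k)) n)
         (/ (INR n + 1)).

Fixpoint euler_partial_prod (N : nat) : R :=
  match N with
  | O => 1
  | S M => euler_partial_prod M * euler_factor (S M)
  end.

Definition euler_term (n : nat) : R :=
  / (INR n + 1) * sum_f_R0 (fun k => (-1) ^ (k + 1) * Binomial.C n k * ln (INR k + 1)) n.

Fixpoint euler_partial_sum (N : nat) : R :=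
  match N with
  | O => 0
  | S M => euler_partial_sum M + euler_term (S M)
  end.

From Stdlib Require Import Reals Lra Lia.
From Coquelicot Require Import Coquelicot.
Open Scope R_scope.

(* For p > 0 let D_n(p) = sum_k (-1)^k C(n,k) ln(p+k)  ([ln_diff n p]).  Writing ln(p+k) - ln p
   as the integral of k/(p+kt) over [0,1] and using
     sum_k (-1)^k C(n,k) / (p+kt) = n! t^n / prod_(j<=n) (p+jt),
   one gets D_(m+1)(p) = -((m+1)/p) (J_m(p) - J_(m+1)(p)), where J_m(p)  ([weight_int p m]) is
   the integral over [0,1] of prod_(j=1..m) jt/(p+jt); for p >= 1 these decrease in m and lie
   in [0, 1/(m+1)].  For Phi_N(p) = sum_(n<=N) D_n(p)/(n+1)  ([ln_diff_sum N p]) this yields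
   Phi_N(p+1) - Phi_N(p) = (1 - J_(N+1)(p))/p and -1/p <= Phi_N(p) - ln p <= 0.  The N-th
   partial sum of the series is -Phi_N(1); telescoping from p = 1 to p = q+1 puts it within
   q/(N+2) + 1/(q+1) of H_q - ln(q+1), so it tends to gamma as N, then q, go to infinity.
   The partial products are its exponentials. *)

Definition alt_diff (n : nat) (g : nat -> R) : R :=
  sum_f_R0 (fun k => (-1) ^ k * Binomial.C n k * g k) n.

Lemma alt_diff_ext n f g :
  (forall k, (k <= n)%nat -> f k = g k) -> alt_diff n f = alt_diff n g.
Proof. intros Hfg; apply sum_eq; intros k Hk; rewrite Hfg; auto. Qed.

Lemma alt_diff_0 g : alt_diff 0 g = g 0%nat.
Proof. unfold alt_diff; simpl; rewrite C_n_0; ring. Qed.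

Lemma alt_diff_S n g : alt_diff (S n) g = alt_diff n g - alt_diff n (fun k => g (S k)).
Proof.
  destruct n as [|n].
  - rewrite !alt_diff_0; unfold alt_diff; simpl; rewrite C_n_0, C_n_n; ring.
  - unfold alt_diff.
    rewrite (decomp_sum _ (S (S n))), (decomp_sum (fun k => (-1) ^ k * Binomial.C (S n) k * g k))
      by lia; simpl pred.
    rewrite tech5, (tech5 (fun k => (-1) ^ k * Binomial.C (S n) k * g (S k))).
    rewrite (sum_eq _ (fun i => - ((-1) ^ i * Binomial.C (S n) i * g (S i))
                          + (-1) ^ S i * Binomial.C (S n) (S i) * g (S i))).
    2:{ intros i Hi; rewrite <- pascal by lia; simpl; ring. }
    rewrite plus_sum, (sum_eq (fun i => - _)
                              (fun i => (-1) ^ i * Binomial.C (S n) i * g (S i) * -1))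
      by (intros; ring).
    rewrite <- scal_sum, !C_n_0, !C_n_n; simpl; ring.
Qed.

Lemma alt_diff_affine n a b f g :
  alt_diff n (fun k => a * f k + b * g k) = a * alt_diff n f + b * alt_diff n g.
Proof.
  unfold alt_diff; rewrite !scal_sum, <- plus_sum; apply sum_eq; intros; ring.
Qed.

Lemma alt_diff_S_const n c : alt_diff (S n) (fun _ => c) = 0.
Proof. rewrite alt_diff_S; ring. Qed.

Definition arith_prod (p t : R) (n : nat) : R := prod_f_R0 (fun j => p + INR j * t) n.

Lemma arith_prod_S p t n : arith_prod p t (S n) = arith_prod p t n * (p + INR (S n) * t).
Proof. reflexivity. Qed.

Lemma arith_prod_pos p t n : 0 < p -> 0 <= t -> 0 < arith_prod p t n.
Proof.
  intros Hp Ht; induction n as [|n IHn]; [unfold arith_prod; simpl; lra|].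
  rewrite arith_prod_S; pose proof (pos_INR (S n)).
  apply Rmult_lt_0_compat; nra.
Qed.

Lemma arith_prod_shift p t n : p * arith_prod (p + t) t n = arith_prod p t (S n).
Proof.
  induction n as [|n IHn]; [unfold arith_prod; simpl; ring|].
  rewrite arith_prod_S, <- Rmult_assoc, IHn, (arith_prod_S p t (S n)), (S_INR (S n)); ring.
Qed.

Lemma alt_diff_inv_arith p t n : 0 < p -> 0 <= t ->
  alt_diff n (fun k => / (p + INR k * t)) = INR (Factorial.fact n) * t ^ n / arith_prod p t n.
Proof.
  revert p; induction n as [|n IHn]; intros p Hp Ht.
  - rewrite alt_diff_0; unfold arith_prod; simpl; field; lra.
  - rewrite alt_diff_S, (alt_diff_ext n (fun k => / (p + INR (S k) * t))
                             (fun k => / ((p + t) + INR k * t)))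
      by (intros; rewrite S_INR; f_equal; ring).
    rewrite IHn, IHn by lra.
    assert (Hshift : arith_prod (p + t) t n = arith_prod p t n * (p + INR (S n) * t) / p).
    { rewrite <- arith_prod_S, <- arith_prod_shift; field; lra. }
    rewrite Hshift, arith_prod_S.
    pose proof (arith_prod_pos p t n Hp Ht); pose proof (pos_INR (S n)).
    rewrite fact_simpl, mult_INR; simpl pow; field; split; [nra|lra].
Qed.

Fixpoint weight (p : R) (m : nat) (t : R) : R :=
  match m with
  | O => 1
  | S k => weight p k t * (INR (S k) * t / (p + INR (S k) * t))
  end.

Lemma weight_S p m t :
  weight p (S m) t = weight p m t * (INR (S m) * t / (p + INR (S m) * t)).
Proof. reflexivity. Qed.

Lemma weight_closed_form p m t : 0 < p -> 0 <= t ->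
  weight p m t = p * INR (Factorial.fact m) * t ^ m / arith_prod p t m.
Proof.
  intros Hp Ht; induction m as [|m IHm].
  - unfold arith_prod; simpl; field; lra.
  - rewrite weight_S, IHm, arith_prod_S, fact_simpl, mult_INR.
    pose proof (arith_prod_pos p t m Hp Ht); pose proof (pos_INR (S m)).
    simpl pow; field; split; [nra|lra].
Qed.

Lemma weight_factor_bounds p k t : 1 <= p -> 0 <= t <= 1 ->
  0 <= INR (S k) * t / (p + INR (S k) * t) <= INR (S k) / (INR (S k) + 1).
Proof.
  intros Hp Ht; pose proof (pos_INR (S k)); split.
  - apply Rdiv_le_0_compat; nra.
  - apply Rmult_le_reg_r with ((p + INR (S k) * t) * (INR (S k) + 1)); [nra|].
    field_simplify; nra.
Qed.

Lemma weight_bounds p m t : 1 <= p -> 0 <= t <= 1 ->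
  0 <= weight p m t /\ weight p (S m) t <= weight p m t /\ weight p m t <= / (INR m + 1).
Proof.
  intros Hp Ht.
  assert (Hrange : forall k, 0 <= weight p k t <= / (INR k + 1)).
  { intros k; induction k as [|k [H0 H1]]; [simpl; lra|].
    rewrite weight_S; destruct (weight_factor_bounds p k t Hp Ht) as [F0 F1].
    pose proof (pos_INR k); rewrite S_INR in *; split; [nra|].
    apply Rle_trans with (/ (INR k + 1) * ((INR k + 1) / (INR k + 1 + 1))).
    - apply Rmult_le_compat; lra.
    - right; field; lra. }
  destruct (Hrange m) as [H0 H1]; split; [lra|split; [|lra]].
  rewrite weight_S; destruct (weight_factor_bounds p m t Hp Ht) as [F0 F1].
  assert (INR (S m) / (INR (S m) + 1) <= 1).
  { pose proof (pos_INR (S m)); apply Rmult_le_reg_r with (INR (S m) + 1); [lra|].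
    field_simplify; lra. }
  nra.
Qed.

Lemma weight_continuous p m t : 0 < p -> 0 <= t -> continuous (weight p m) t.
Proof.
  intros Hp Ht; induction m as [|m IHm].
  - apply continuous_const.
  - apply (continuous_mult (weight p m) (fun s => INR (S m) * s / (p + INR (S m) * s)));
      [exact IHm|].
    pose proof (pos_INR (S m)); set (c := INR (S m)) in *.
    apply (ex_derive_continuous (fun s => c * s / (p + c * s))); auto_derive; nra.
Qed.

Definition weight_int (p : R) (m : nat) : R := RInt (weight p m) 0 1.

Lemma weight_int_correct p m : 0 < p -> is_RInt (weight p m) 0 1 (weight_int p m).
Proof.
  intros Hp; apply (RInt_correct (weight p m)), ex_RInt_continuous; intros t Ht.
  rewrite Rmin_left in Ht by lra; apply weight_continuous; lra.
Qed.

Lemma is_RInt_const_01 (c : R) : is_RInt (fun _ => c) 0 1 c.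
Proof.
  pose proof (is_RInt_const (V := R_NormedModule) 0 1 c) as Hc.
  unfold scal in Hc; simpl in Hc; unfold mult in Hc; simpl in Hc.
  replace ((1 - 0) * c) with c in Hc by ring.
  exact Hc.
Qed.

Lemma weight_int_0 p : weight_int p 0 = 1.
Proof. apply is_RInt_unique, is_RInt_const_01. Qed.

Lemma weight_int_bounds p m : 1 <= p ->
  0 <= weight_int p m /\ weight_int p (S m) <= weight_int p m /\ weight_int p m <= / (INR m + 1).
Proof.
  intros Hp.
  assert (Hint : forall k, is_RInt (weight p k) 0 1 (weight_int p k))
    by (intros; apply weight_int_correct; lra).
  split; [|split].
  - apply (is_RInt_le (fun _ => 0) (weight p m) 0 1); [lra|apply is_RInt_const_01|apply Hint|].
    intros t Ht; apply (weight_bounds p m t Hp); lra.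
  - apply (is_RInt_le (weight p (S m)) (weight p m) 0 1); [lra|apply Hint|apply Hint|].
    intros t Ht; apply (weight_bounds p m t Hp); lra.
  - apply (is_RInt_le (weight p m) (fun _ => / (INR m + 1)) 0 1);
      [lra|apply Hint|apply is_RInt_const_01|].
    intros t Ht; apply (weight_bounds p m t Hp); lra.
Qed.

Lemma is_RInt_sum_f_R0 (c : nat -> R) (F : nat -> R -> R) (v : nat -> R) a b N :
  (forall k, is_RInt (F k) a b (v k)) ->
  is_RInt (fun t => sum_f_R0 (fun k => c k * F k t) N) a b (sum_f_R0 (fun k => c k * v k) N).
Proof.
  intros HF; induction N as [|N IHN]; simpl sum_f_R0.
  - exact (is_RInt_scal (F 0%nat) a b (c 0%nat) (v 0%nat) (HF 0%nat)).
  - apply (is_RInt_plus _ (fun t => c (S N) * F (S N) t)); [exact IHN|].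
    exact (is_RInt_scal (F (S N)) a b (c (S N)) (v (S N)) (HF (S N))).
Qed.

Lemma is_RInt_ln_shift p x : 0 < p -> 0 <= x ->
  is_RInt (fun t => x / (p + x * t)) 0 1 (ln (p + x) - ln p).
Proof.
  intros Hp Hx.
  replace (ln (p + x) - ln p) with (minus (ln (p + x * 1)) (ln (p + x * 0)))
    by (unfold minus, plus, opp; simpl; rewrite Rmult_1_r, Rmult_0_r, Rplus_0_r; ring).
  apply (is_RInt_derive (fun t => ln (p + x * t))); intros t Ht;
    rewrite Rmin_left, Rmax_right in Ht by lra.
  - auto_derive; [nra|field; nra].
  - apply (ex_derive_continuous (fun t => x / (p + x * t))); auto_derive; nra.
Qed.

Definition ln_diff (n : nat) (p : R) : R := alt_diff n (fun k => ln (p + INR k)).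

Lemma ln_diff_0 p : ln_diff 0 p = ln p.
Proof. unfold ln_diff; rewrite alt_diff_0, Rplus_0_r; reflexivity. Qed.

Lemma ln_diff_S n p : ln_diff (S n) p = ln_diff n p - ln_diff n (p + 1).
Proof.
  unfold ln_diff; rewrite alt_diff_S; f_equal.
  apply alt_diff_ext; intros; rewrite S_INR; f_equal; ring.
Qed.

Lemma ln_diff_S_integral m p : 0 < p ->
  is_RInt (fun t => alt_diff (S m) (fun k => INR k / (p + INR k * t))) 0 1 (ln_diff (S m) p).
Proof.
  intros Hp.
  replace (ln_diff (S m) p) with (alt_diff (S m) (fun k => ln (p + INR k) - ln p)).
  - apply (is_RInt_sum_f_R0 (fun k => (-1) ^ k * Binomial.C (S m) k)
                             (fun k t => INR k / (p + INR k * t))).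
    intros k; apply is_RInt_ln_shift; [exact Hp|apply pos_INR].
  - rewrite (alt_diff_ext _ _ (fun k => 1 * ln (p + INR k) + (- ln p) * 1)) by (intros; ring).
    rewrite alt_diff_affine, alt_diff_S_const; unfold ln_diff; ring.
Qed.

Lemma alt_diff_S_weight m p t : 0 < p -> 0 < t ->
  alt_diff (S m) (fun k => INR k / (p + INR k * t))
  = - (INR (S m) / p) * (weight p m t - weight p (S m) t).
Proof.
  intros Hp Ht.
  rewrite (alt_diff_ext _ _ (fun k => / t * 1 + (- (p / t)) * / (p + INR k * t))).
  2:{ intros k _; pose proof (pos_INR k). field. split; [nra|lra]. }
  rewrite alt_diff_affine, alt_diff_S_const, alt_diff_inv_arith by lra.
  rewrite weight_S, weight_closed_form, arith_prod_S by lra.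
  pose proof (arith_prod_pos p t m Hp ltac:(lra)).
  assert (0 < p + INR (S m) * t) by (pose proof (pos_INR (S m)); nra).
  rewrite fact_simpl, mult_INR; simpl pow; field; repeat split; lra.
Qed.

Lemma ln_diff_S_weight_int m p : 0 < p ->
  ln_diff (S m) p = - (INR (S m) / p) * (weight_int p m - weight_int p (S m)).
Proof.
  intros Hp; set (c := - (INR (S m) / p)).
  transitivity (RInt (fun t => c * (weight p m t - weight p (S m) t)) 0 1).
  - symmetry; apply is_RInt_unique.
    apply (is_RInt_ext (fun t => alt_diff (S m) (fun k => INR k / (p + INR k * t)))).
    + intros t Ht; rewrite Rmin_left, Rmax_right in Ht by lra.
      apply alt_diff_S_weight; lra.
    + apply ln_diff_S_integral, Hp.
  - apply is_RInt_unique.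
    apply (is_RInt_scal (fun t => weight p m t - weight p (S m) t) 0 1 c
             (weight_int p m - weight_int p (S m))).
    apply (is_RInt_minus (weight p m)); apply weight_int_correct, Hp.
Qed.

Definition ln_diff_sum (N : nat) (p : R) : R :=
  sum_f_R0 (fun n => ln_diff n p / (INR n + 1)) N.

Lemma ln_diff_sum_S N p :
  ln_diff_sum (S N) p = ln_diff_sum N p + ln_diff (S N) p / (INR (S N) + 1).
Proof. reflexivity. Qed.

Lemma ln_diff_shift_weight_int m p : 0 < p ->
  (ln_diff m (p + 1) - ln_diff m p) / (INR m + 1) = (weight_int p m - weight_int p (S m)) / p.
Proof.
  intros Hp; pose proof (pos_INR m).
  replace (ln_diff m (p + 1) - ln_diff m p) with (- ln_diff (S m) p) by (rewrite ln_diff_S; ring).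
  rewrite ln_diff_S_weight_int, S_INR by exact Hp; field; lra.
Qed.

Lemma ln_diff_sum_shift N p : 0 < p ->
  ln_diff_sum N (p + 1) - ln_diff_sum N p = (1 - weight_int p (S N)) / p.
Proof.
  intros Hp; induction N as [|N IHN].
  - pose proof (ln_diff_shift_weight_int 0 p Hp) as H0; rewrite weight_int_0 in H0.
    unfold ln_diff_sum; simpl sum_f_R0; rewrite <- H0; simpl INR; field.
  - replace (ln_diff_sum (S N) (p + 1) - ln_diff_sum (S N) p)
      with (ln_diff_sum N (p + 1) - ln_diff_sum N p
            + (ln_diff (S N) (p + 1) - ln_diff (S N) p) / (INR (S N) + 1))
      by (rewrite !ln_diff_sum_S; pose proof (pos_INR (S N)); field; lra).
    rewrite IHN, ln_diff_shift_weight_int by exact Hp; field; lra.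
Qed.

Lemma ln_diff_sum_sub_ln_bounds N p : 1 <= p ->
  - (1 - weight_int p N) / p <= ln_diff_sum N p - ln p <= 0.
Proof.
  intros Hp; induction N as [|N [IHlo IHhi]].
  - unfold ln_diff_sum; simpl sum_f_R0; rewrite ln_diff_0, weight_int_0; simpl INR.
    replace (ln p / (0 + 1) - ln p) with 0 by field; unfold Rdiv; lra.
  - destruct (weight_int_bounds p N Hp) as [_ [Hdecr _]].
    pose proof (pos_INR (S N)) as Hs.
    set (d := (weight_int p N - weight_int p (S N)) / p).
    assert (Hd : 0 <= d) by (apply Rdiv_le_0_compat; lra).
    set (w := INR (S N) / (INR (S N) + 1)).
    assert (Hw : 0 <= w <= 1).
    { split; [apply Rdiv_le_0_compat; lra|].
      apply Rmult_le_reg_r with (INR (S N) + 1); [lra|]; unfold w; field_simplify; lra. }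
    replace (ln_diff_sum (S N) p - ln p) with (ln_diff_sum N p - ln p - w * d)
      by (rewrite ln_diff_sum_S, ln_diff_S_weight_int by lra; unfold d, w; field; split; lra).
    replace (- (1 - weight_int p (S N)) / p) with (- (1 - weight_int p N) / p - d)
      by (unfold d; field; lra).
    nra.
Qed.

Fixpoint weighted_harmonic (N q : nat) : R :=
  match q with
  | O => 0
  | S r => weighted_harmonic N r + weight_int (INR (S r)) (S N) / INR (S r)
  end.

Lemma ln_diff_sum_telescope N q :
  ln_diff_sum N (INR q + 1) - ln_diff_sum N 1 = harmonic q - weighted_harmonic N q.
Proof.
  induction q as [|q IHq].
  - simpl; rewrite Rplus_0_l; ring.
  - cbn [harmonic weighted_harmonic]; rewrite S_INR.
    pose proof (pos_INR q).
    replace (ln_diff_sum N (INR q + 1 + 1) - ln_diff_sum N 1)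
      with (ln_diff_sum N (INR q + 1 + 1) - ln_diff_sum N (INR q + 1)
            + (ln_diff_sum N (INR q + 1) - ln_diff_sum N 1)) by ring.
    rewrite ln_diff_sum_shift, IHq by lra; field; lra.
Qed.

Lemma weighted_harmonic_bounds N q : 0 <= weighted_harmonic N q <= INR q / (INR N + 2).
Proof.
  pose proof (pos_INR N); induction q as [|q IHq].
  - simpl; unfold Rdiv; lra.
  - cbn [weighted_harmonic]; rewrite S_INR; pose proof (pos_INR q).
    destruct (weight_int_bounds (INR q + 1) (S N) ltac:(lra)) as [J0 [_ J1]].
    rewrite S_INR in J1.
    assert (Hterm : 0 <= weight_int (INR q + 1) (S N) / (INR q + 1) <= / (INR N + 2)).
    { split; [apply Rdiv_le_0_compat; lra|].
      apply Rle_trans with (weight_int (INR q + 1) (S N)).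
      - apply Rmult_le_reg_r with (INR q + 1); [lra|]; field_simplify; nra.
      - replace (INR N + 2) with (INR N + 1 + 1) by ring; lra. }
    replace ((INR q + 1) / (INR N + 2)) with (INR q / (INR N + 2) + / (INR N + 2)) by (field; lra).
    lra.
Qed.

Lemma euler_term_ln_diff n : euler_term n = - (ln_diff n 1 / (INR n + 1)).
Proof.
  unfold euler_term, ln_diff, alt_diff, Rdiv.
  rewrite (sum_eq _ (fun k => (-1) ^ k * Binomial.C n k * ln (1 + INR k) * -1))
    by (intros; rewrite pow_add, Rplus_comm; ring).
  rewrite <- scal_sum; ring.
Qed.

Lemma euler_partial_sum_ln_diff_sum N : euler_partial_sum N = - ln_diff_sum N 1.
Proof.
  induction N as [|N IHN].
  - unfold ln_diff_sum; simpl; rewrite ln_diff_0, ln_1; field.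
  - cbn [euler_partial_sum]; rewrite IHN, ln_diff_sum_S, euler_term_ln_diff; ring.
Qed.

Lemma euler_partial_sum_approx N q :
  Rabs (euler_partial_sum N - (harmonic q - ln (INR q + 1)))
  <= INR q / (INR N + 2) + / (INR q + 1).
Proof.
  pose proof (pos_INR q).
  pose proof (ln_diff_sum_telescope N q) as Htel.
  destruct (ln_diff_sum_sub_ln_bounds N (INR q + 1) ltac:(lra)) as [Hlo Hhi].
  destruct (weight_int_bounds (INR q + 1) N ltac:(lra)) as [HJ _].
  destruct (weighted_harmonic_bounds N q) as [HE0 HE1].
  assert (- / (INR q + 1) <= - (1 - weight_int (INR q + 1) N) / (INR q + 1)).
  { apply Rmult_le_reg_r with (INR q + 1); [lra|]; field_simplify; lra. }
  rewrite euler_partial_sum_ln_diff_sum; apply Rabs_le; lra.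
Qed.

Lemma ln_le_sub_1 z : 0 < z -> ln z <= z - 1.
Proof. intros Hz; pose proof (exp_ineq1_le (ln z)); rewrite exp_ln in *; lra. Qed.

Lemma ln_succ_sub_ln_bounds a : 0 < a -> / (a + 1) <= ln (a + 1) - ln a <= / a.
Proof.
  intros Ha; split.
  - pose proof (ln_le_sub_1 (a / (a + 1)) ltac:(apply Rdiv_lt_0_compat; lra)) as H.
    rewrite ln_div in H by lra.
    replace (a / (a + 1) - 1) with (- / (a + 1)) in H by (field; lra); lra.
  - pose proof (ln_le_sub_1 ((a + 1) / a) ltac:(apply Rdiv_lt_0_compat; lra)) as H.
    rewrite ln_div in H by lra.
    replace ((a + 1) / a - 1) with (/ a) in H by (field; lra); lra.
Qed.

Lemma is_lim_seq_inv_INR_plus c : 0 < c -> is_lim_seq (fun n => / (INR n + c)) 0.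
Proof.
  intros Hc.
  assert (Hinf : is_lim_seq (fun n => INR n + c) p_infty).
  { apply (is_lim_seq_plus _ _ p_infty c p_infty is_lim_seq_INR (is_lim_seq_const c)).
    reflexivity. }
  apply (is_lim_seq_inv _ _ Hinf); discriminate.
Qed.

(* H_n - ln (n + 1) increases, H_(n+1) - ln (n + 1) decreases, and they differ by 1/(n+1). *)
Lemma harmonic_sub_ln_cvg : exists L : R,
  is_lim_seq (fun n => harmonic n - ln (INR n)) L /\
  is_lim_seq (fun n => harmonic n - ln (INR n + 1)) L.
Proof.
  set (u := fun n => harmonic n - ln (INR n + 1)).
  set (v := fun n => harmonic (S n) - ln (INR (S n))).
  assert (Hstep : forall n, / (INR n + 2) <= ln (INR n + 2) - ln (INR n + 1) <= / (INR n + 1)).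
  { intros n; pose proof (pos_INR n).
    replace (INR n + 2) with (INR n + 1 + 1) by ring; apply ln_succ_sub_ln_bounds; lra. }
  destruct (ex_lim_seq_adj u v) as [Hu [Hv Huv]].
  - intros n; unfold u; cbn [harmonic]; rewrite !S_INR.
    destruct (Hstep n); replace (INR n + 1 + 1) with (INR n + 2) by ring; lra.
  - intros n; unfold v; cbn [harmonic]; rewrite !S_INR.
    destruct (Hstep n); replace (INR n + 1 + 1) with (INR n + 2) by ring; lra.
  - apply (is_lim_seq_ext (fun n => / (INR n + 1)));
      [intros n; unfold u, v; cbn [harmonic]; rewrite S_INR; ring|].
    apply is_lim_seq_inv_INR_plus; lra.
  - exists (real (Lim_seq u)); split.
    + apply is_lim_seq_incr_1; rewrite Huv; apply Lim_seq_correct', Hv.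
    + apply Lim_seq_correct', Hu.
Qed.

Lemma is_lim_seq_of_approx (u c b : nat -> R) (a : nat -> nat -> R) (L : R) :
  is_lim_seq c L -> is_lim_seq b 0 -> (forall q, is_lim_seq (a q) 0) ->
  (forall q N, Rabs (u N - c q) <= a q N + b q) -> is_lim_seq u L.
Proof.
  intros Hc Hb Ha Happrox; apply is_lim_seq_spec; intros eps.
  assert (He : 0 < eps / 3) by (destruct eps; simpl; lra).
  set (e := mkposreal _ He).
  apply is_lim_seq_spec in Hc; destruct (Hc e) as [Nc HNc].
  apply is_lim_seq_spec in Hb; destruct (Hb e) as [Nb HNb].
  set (q := Nat.max Nc Nb).
  pose proof (HNc q ltac:(lia)) as Hcq; pose proof (HNb q ltac:(lia)) as Hbq.
  pose proof (Ha q) as Haq; apply is_lim_seq_spec in Haq; destruct (Haq e) as [Na HNa].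
  exists Na; intros N HN.
  pose proof (HNa N HN) as HaN; pose proof (Happrox q N) as HuN.
  rewrite Rminus_0_r in HaN, Hbq; simpl in *.
  apply Rabs_lt_between in HaN; apply Rabs_lt_between in Hbq.
  apply Rabs_lt_between in Hcq; apply Rabs_le_between in HuN.
  apply Rabs_lt_between; lra.
Qed.

Lemma ln_prod_f_R0 (f : nat -> R) n :
  (forall k, 0 < f k) -> ln (prod_f_R0 f n) = sum_f_R0 (fun k => ln (f k)) n.
Proof.
  intros Hf; induction n as [|n IHn]; [reflexivity|].
  cbn [prod_f_R0 sum_f_R0]; rewrite ln_mult, IHn; [reflexivity| |apply Hf].
  clear IHn; induction n as [|n IHn]; [apply Hf|apply Rmult_lt_0_compat; [exact IHn|apply Hf]].
Qed.

Lemma euler_factor_exp n : euler_factor n = exp (euler_term n).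
Proof.
  unfold euler_factor, euler_term, Rpower at 1; f_equal.
  rewrite ln_prod_f_R0 by (intros; apply exp_pos).
  f_equal; apply sum_eq; intros; unfold Rpower; rewrite ln_exp; reflexivity.
Qed.

Lemma euler_partial_prod_exp N : euler_partial_prod N = exp (euler_partial_sum N).
Proof.
  induction N as [|N IHN]; cbn [euler_partial_prod euler_partial_sum].
  - rewrite exp_0; reflexivity.
  - rewrite IHN, euler_factor_exp, exp_plus; reflexivity.
Qed.

Theorem mainTheorem1 :
  ex_finite_lim_seq (fun n => harmonic n - ln (INR n)) /\
  is_lim_seq euler_partial_prod (exp euler_gamma) /\
  is_lim_seq euler_partial_sum euler_gamma.
Proof.
  destruct harmonic_sub_ln_cvg as [L [HL HLsucc]].
  assert (Hgamma : euler_gamma = L)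
    by (unfold euler_gamma; rewrite (is_lim_seq_unique _ _ HL); reflexivity).
  assert (Hsum : is_lim_seq euler_partial_sum L).
  { apply (is_lim_seq_of_approx _ _ (fun q => / (INR q + 1))
                                 (fun q N => INR q / (INR N + 2)) L HLsucc).
    - apply is_lim_seq_inv_INR_plus; lra.
    - intros q; replace (Finite 0) with (Rbar_mult (INR q) 0) by (simpl; f_equal; ring).
      apply is_lim_seq_scal_l, is_lim_seq_inv_INR_plus; lra.
    - intros q N; apply euler_partial_sum_approx. }
  rewrite Hgamma; split; [exists L; exact HL|split; [|exact Hsum]].
  apply (is_lim_seq_ext (fun N => exp (euler_partial_sum N)));
    [intros N; symmetry; apply euler_partial_prod_exp|].
  apply is_lim_seq_continuous; [apply derivable_continuous_pt, derivable_pt_exp|exact Hsum].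
Qed.
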